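(* Let $A\in\mathbb{C}^{m\times n}$ have rank $r$ with $\mathrm{rank}(AA^{\sim})=r>0$, and let $A=BC$ be a full rank factorization of $A$, where $B\in\mathbb{C}^{m\times r}$ and $C\in\mathbb{C}^{r\times n}$ both have rank $r$. Then $$A\{1,2,4^{\mathfrak{m}}\}=\left\{C^{\sim}(CC^{\sim})^{-1}B_L^{-1} : B_L^{-1}\in\mathbb{C}^{r\times m} \text{ is a left inverse of } B\right\}.$$
   Context: For a positive integer $k$, the Minkowski metric matrix of order $k$ is $G_k=\mathrm{diag}(1,-I_{k-1})$ (with $G_1=(1)$). For $A\in\mathbb{C}^{m\times n}$, the Minkowski adjoint is $A^{\sim}=G_nA^*G_m$, where $A^*$ is the conjugate transpose. For $A\in\mathbb{C}^{m\times n}$ and $X\in\mathbb{C}^{n\times m}$ consider the equations $(1)\ AXA=A$, $(2)\ XAX=X$, $(3^{\mathfrak{m}})\ (AX)^{\sim}=AX$, $(4^{\mathfrak{m}})\ (XA)^{\sim}=XA$; $A\{i,\dots,k\}$ denotes the set of all $X$ satisfying the listed equations. A left inverse of $B$ is a matrix $B_L^{-1}$ with $B_L^{-1}B=I_r$. *)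

From HB Require Import structures.
From mathcomp Require Import all_boot all_order all_algebra.
From mathcomp Require Import complex.
From mathcomp Require Import Rstruct.
Set Implicit Arguments. Unset Strict Implicit. Unset Printing Implicit Defensive.
Import Order.TTheory GRing.Theory Num.Theory.
Local Open Scope ring_scope.

Definition CC : Type := complex Rdefinitions.R.
Definition CC_numClosed : numClosedFieldType := complex Rdefinitions.R.

Definition minkG (k : nat) : 'M[CC_numClosed]_k :=
  \matrix_(i < k, j < k)
    (if i == j then (if (i : nat) == 0%N then 1 else -1) else 0).

Definition ctrmx (m n : nat) (A : 'M[CC_numClosed]_(m, n)) : 'M[CC_numClosed]_(n, m) :=
  map_mx (fun z => z^*) A^T.

(* Minkowski adjoint A~ = G_n A^* G_m for A of size m x n. *)
Definition madj (m n : nat) (A : 'M[CC_numClosed]_(m, n)) : 'M[CC_numClosed]_(n, m) :=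
  minkG n *m ctrmx A *m minkG m.

Definition in_A124m (m n : nat) (A : 'M[CC_numClosed]_(m, n)) (X : 'M[CC_numClosed]_(n, m)) : Prop :=
  [/\ A *m X *m A = A, X *m A *m X = X & madj (X *m A) = X *m A].

(* Write K := C C~, which is invertible because A A~ = B K B~ has rank r, and
   K~ = K.  For X in A{1,2,4^m}, cancelling the full-rank factors in A X A = A
   gives C X B = I, so P := X A = (X B) C satisfies C P = C and P~ = P.  Then
   K (X B)~ = C P~ = C, whence P = C~ K^-1 C, and X = X A X = C~ K^-1 (C X)
   with C X a left inverse of B.  Conversely every C~ K^-1 L with L B = I
   satisfies the three equations, since X A = C~ K^-1 C and C C~ K^-1 = I. *)
From mathcomp Require Import all_boot all_order all_algebra.
Set Implicit Arguments. Unset Strict Implicit. Unset Printing Implicit Defensive.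
Import Order.TTheory GRing.Theory Num.Theory.
Local Open Scope ring_scope.

Lemma mxrankM_maxm (F : fieldType) m p q n (X : 'M[F]_(m, p)) (K : 'M[F]_(p, q))
    (Y : 'M[F]_(q, n)) :
  (\rank (X *m K *m Y) <= \rank K)%N.
Proof. exact: leq_trans (mxrankM_maxl _ _) (mxrankM_maxr _ _). Qed.

Lemma full_rank_factor_inner_inverse (F : fieldType) m n r
    (B : 'M[F]_(m, r)) (C : 'M[F]_(r, n)) (X : 'M[F]_(n, m)) :
  row_full B -> row_free C ->
  B *m C *m X *m (B *m C) = B *m C <-> C *m X *m B = 1%:M.
Proof.
move=> fullB freeC; split=> [BCX | CXB].
- apply: (row_free_inj freeC); apply: (row_full_inj fullB).
  by rewrite mul1mx !mulmxA -(mulmxA _ B C).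
- by rewrite !mulmxA -3!(mulmxA B) CXB mul1mx.
Qed.

Lemma minkG_sqr k : minkG k *m minkG k = 1%:M.
Proof.
apply/matrixP=> i j; rewrite !mxE (bigD1 i) //=.
have -> : \sum_(l < k | l != i) minkG k i l * minkG k l j = 0.
  by apply: big1 => l /negbTE nli; rewrite !mxE eq_sym nli mul0r.
rewrite addr0 !mxE eqxx; have [->|_] := eqVneq i j; last by rewrite mulr0.
by case: (_ == 0)%N; rewrite ?mulr1 ?mulrNN ?mulr1.
Qed.

Lemma ctrmx_minkG k : ctrmx (minkG k) = minkG k.
Proof.
apply/matrixP=> i j; rewrite !mxE; have [->|_] := eqVneq j i; last by rewrite conjC0.
by case: ifP; rewrite ?rmorphN rmorph1.
Qed.

Lemma ctrmxM m n p (X : 'M[CC_numClosed]_(m, n)) (Y : 'M[CC_numClosed]_(n, p)) :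
  ctrmx (X *m Y) = ctrmx Y *m ctrmx X.
Proof. by rewrite /ctrmx trmx_mul map_mxM. Qed.

Lemma ctrmxK m n (X : 'M[CC_numClosed]_(m, n)) : ctrmx (ctrmx X) = X.
Proof. by apply/matrixP=> i j; rewrite !mxE conjCK. Qed.

Lemma ctrmx1 k : ctrmx (1%:M : 'M[CC_numClosed]_k) = 1%:M.
Proof. by rewrite /ctrmx trmx1 map_mx1. Qed.

Lemma madjM m n p (X : 'M[CC_numClosed]_(m, n)) (Y : 'M[CC_numClosed]_(n, p)) :
  madj (X *m Y) = madj Y *m madj X.
Proof.
by rewrite /madj ctrmxM !mulmxA -[_ *m minkG n *m minkG n]mulmxA minkG_sqr mulmx1.
Qed.

Lemma madjK m n (X : 'M[CC_numClosed]_(m, n)) : madj (madj X) = X.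
Proof.
rewrite /madj !ctrmxM ctrmxK !ctrmx_minkG !mulmxA minkG_sqr mul1mx.
by rewrite -mulmxA minkG_sqr mulmx1.
Qed.

Lemma madj1 k : madj (1%:M : 'M[CC_numClosed]_k) = 1%:M.
Proof. by rewrite /madj ctrmx1 mulmx1 minkG_sqr. Qed.

Lemma madj_invmx k (K : 'M[CC_numClosed]_k) :
  K \in unitmx -> madj (invmx K) = invmx (madj K).
Proof.
move=> Ku; have inv : madj (invmx K) *m madj K = 1%:M.
  by rewrite -madjM mulmxV // madj1.
have [_ adjKu] := mulmx1_unit inv.
by rewrite -[LHS]mulmx1 -(mulmxV adjKu) mulmxA inv mul1mx.
Qed.

Lemma unitmx_gram_factor m n r
    (B : 'M[CC_numClosed]_(m, r)) (C : 'M[CC_numClosed]_(r, n)) :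
  \rank (B *m C *m madj (B *m C)) = r -> C *m madj C \in unitmx.
Proof.
move=> rkA; rewrite -row_free_unit /row_free eqn_leq rank_leq_row -{1}rkA.
by rewrite madjM mulmxA -(mulmxA B) mxrankM_maxm.
Qed.

(* The Minkowski analogue C~ (C C~)^-1 of the Moore-Penrose right inverse of a
   full row rank C. *)
Definition mright r n (C : 'M[CC_numClosed]_(r, n)) : 'M[CC_numClosed]_(n, r) :=
  madj C *m invmx (C *m madj C).

Definition mproj r n (C : 'M[CC_numClosed]_(r, n)) : 'M[CC_numClosed]_n :=
  mright C *m C.

Section MinkowskiRightInverse.

Variables (r n : nat) (C : 'M[CC_numClosed]_(r, n)).
Hypothesis gramC_unit : C *m madj C \in unitmx.

Lemma mulmx_mright : C *m mright C = 1%:M.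
Proof. by rewrite mulmxA mulmxV. Qed.

Lemma mulmx_mproj : C *m mproj C = C.
Proof. by rewrite mulmxA mulmx_mright mul1mx. Qed.

Lemma mproj_mright : mproj C *m mright C = mright C.
Proof. by rewrite -mulmxA mulmx_mright mulmx1. Qed.

Lemma madj_mproj : madj (mproj C) = mproj C.
Proof.
rewrite /mproj /mright madjM (madjM (madj C)) madjK madj_invmx //.
by rewrite madjM madjK mulmxA.
Qed.

Lemma mproj_unique (Q : 'M[CC_numClosed]_(n, r)) :
  C *m Q = 1%:M -> madj (Q *m C) = Q *m C -> Q *m C = mproj C.
Proof.
move=> CQ QCadj; have adjQ : madj Q = invmx (C *m madj C) *m C.
  apply: (canRL (mulKmx gramC_unit)).
  by rewrite -mulmxA -madjM QCadj mulmxA CQ mul1mx.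
by rewrite -QCadj madjM adjQ mulmxA.
Qed.

End MinkowskiRightInverse.

Theorem theorem4p7 (m n r : nat)
  (A : 'M[CC_numClosed]_(m, n)) (B : 'M[CC_numClosed]_(m, r)) (C : 'M[CC_numClosed]_(r, n)) :
  (0 < r)%N ->
  \rank A = r ->
  \rank (A *m madj A) = r ->
  \rank B = r -> \rank C = r ->
  A = B *m C ->
  forall X : 'M[CC_numClosed]_(n, m),
    in_A124m A X <->
    exists BL : 'M[CC_numClosed]_(r, m),
      BL *m B = 1%:M /\ X = madj C *m invmx (C *m madj C) *m BL.
Proof.
move=> _ _ rkAA rkB rkC eA X; rewrite eA in rkAA *.
have gramC_unit := unitmx_gram_factor rkAA.
have fullB : row_full B by rewrite /row_full rkB.
have freeC : row_free C by rewrite /row_free rkC.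
split=> [[AXA XAX XAadj] | [BL [BLB ->]]].
- have CXB : C *m X *m B = 1%:M.
    exact/(full_rank_factor_inner_inverse X fullB freeC).
  have XA : X *m (B *m C) = mproj C.
    rewrite mulmxA; apply: (mproj_unique gramC_unit).
      by rewrite mulmxA CXB.
    by rewrite -mulmxA XAadj.
  by exists (C *m X); split; rewrite // mulmxA -{1}XAX XA.
- have XA : mright C *m BL *m (B *m C) = mproj C.
    by rewrite mulmxA -(mulmxA _ BL) BLB mulmx1.
  split; rewrite -/(mright C) ?XA.
  + by rewrite -mulmxA XA -mulmxA (mulmx_mproj gramC_unit).
  + by rewrite mulmxA (mproj_mright gramC_unit).
  + by rewrite (madj_mproj gramC_unit).
Qed.
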